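(* Let $p\colon H\to K$ be a morphism of smooth 2-groups. Then the canonical functor $\kappa\colon\ker^{\mathtt h}(p)\to\mathrm{Cart}$ is a Grothendieck fibration in groupoids.
   Context: $\mathrm{Cart}$ is the category of manifolds diffeomorphic to some $\mathbb R^n$ with smooth maps. A functor $\pi\colon D\to C$ is a Grothendieck fibration in groupoids if every $f\colon c\to\pi(d)$ has a lift $\hat f\colon\hat c\to d$, and every morphism of $D$ is $\pi$-Cartesian (for $\zeta_{12}\colon d_1\to d_2$, $\zeta_{02}\colon d_0\to d_2$ and $f_{01}\colon\pi(d_0)\to\pi(d_1)$ with $\pi(\zeta_{12})f_{01}=\pi(\zeta_{02})$ there is a unique $\hat f_{01}$ over $f_{01}$ with $\zeta_{12}\hat f_{01}=\zeta_{02}$). Smooth 2-groups are group objects (with unit 1-morphism $u$, product, coherent associator and unitors, and $(\otimes,\mathrm{pr}_1)$ an equivalence) in the 2-category of categories equipped with a Grothendieck fibration in groupoids to $\mathrm{Cart}$, whose terminal object is $\mathrm{id}_{\mathrm{Cart}}$; morphisms are functors strictly over $\mathrm{Cart}$ with coherent monoidal structure. For $\pi_H\colon H\to\mathrm{Cart}$, $\ker^{\mathtt h}(p)$ is the homotopy pullback of $\mathrm{Cart}\xrightarrow{u_K}K\xleftarrow{p}H$: its objects are pairs $(h,\eta)$ with $h\in H$ and $\eta\colon p(h)\to u_K(\pi_H(h))$ an isomorphism in $K$ projecting to an identity, and its morphisms $(h_0,\eta_0)\to(h_1,\eta_1)$ are morphisms $\zeta\colon h_0\to h_1$ with $\eta_1\circ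 p(\zeta)=u_K(\pi_H(\zeta))\circ\eta_0$; $\kappa(h,\eta)=\pi_H(h)$, $\kappa(\zeta)=\pi_H(\zeta)$. *)

From Stdlib Require Import ProofIrrelevance Eqdep.

Record Cat := {
  ob : Type;
  hom : ob -> ob -> Type;
  idm : forall a, hom a a;
  comp : forall a b c, hom b c -> hom a b -> hom a c;
  comp_idl : forall a b (f : hom a b), comp a b b (idm b) f = f;
  comp_idr : forall a b (f : hom a b), comp a a b f (idm a) = f;
  comp_assoc : forall a b c d (f : hom a b) (g : hom b c) (h : hom c d),
      comp a c d h (comp a b c g f) = comp a b d (comp b c d h g) f }.

Arguments hom {_} _ _.
Arguments idm {_} _.
Arguments comp {_ _ _ _} _ _.
Arguments comp_idl {_ _ _} _.
Arguments comp_idr {_ _ _} _.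
Arguments comp_assoc {_ _ _ _ _} f g h.

Definition is_iso (C : Cat) (a b : ob C) (f : hom a b) : Prop :=
  exists g : hom b a, comp g f = idm a /\ comp f g = idm b.
Arguments is_iso {C a b} f.

Record Functor (C D : Cat) := {
  fobj : ob C -> ob D;
  fmap : forall a b, @hom C a b -> @hom D (fobj a) (fobj b);
  fmap_id : forall a, fmap a a (idm a) = idm (fobj a);
  fmap_comp : forall a b c (f : hom a b) (g : hom b c),
      fmap a c (comp g f) = comp (fmap b c g) (fmap a b f) }.

Arguments fobj {C D} _ _.
Arguments fmap {C D} _ {a b} _.
Arguments fmap_id {C D} _ a.
Arguments fmap_comp {C D} _ {a b c} f g.

Definition IdF (C : Cat) : Functor C C :=
  {| fobj := fun a => a; fmap := fun a b f => f;
     fmap_id := fun a => eq_refl; fmap_comp := fun a b c f g => eq_refl |}.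

Definition CompF (C D E : Cat) (F : Functor C D) (G : Functor D E) : Functor C E.
Proof.
  refine {| fobj := fun a => fobj G (fobj F a);
            fmap := fun a b f => fmap G (fmap F f) |}.
  - intro a. rewrite fmap_id. apply fmap_id.
  - intros a b c f g. rewrite fmap_comp. apply fmap_comp.
Defined.
Arguments CompF {C D E} F G.

(** A morphism viewed as a point of the total "arrow type" (source, target,
    morphism).  Equality of such points is how we express that a morphism is
    (strictly) equal to another one whose endpoints are only propositionally
    equal, e.g. "pi(f^) = f" for a lift. *)
Definition arr (C : Cat) := {a : ob C & {b : ob C & @hom C a b}}.
Definition mkarr (C : Cat) (a b : ob C) (f : hom a b) : arr C :=
  existT _ a (existT _ b f).
Arguments mkarr {C a b} f.

Lemma mkarr_inv (C : Cat) (a b : ob C) (f g : hom a b) :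
  mkarr f = mkarr g -> f = g.
Proof.
  unfold mkarr; intro H. apply inj_pairT2 in H. apply inj_pairT2 in H. exact H.
Qed.

Lemma mkarr_comp (C : Cat) (a b c a' b' c' : ob C)
  (f : hom a b) (g : hom b c) (f' : hom a' b') (g' : hom b' c') :
  mkarr f = mkarr f' -> mkarr g = mkarr g' -> mkarr (comp g f) = mkarr (comp g' f').
Proof.
  unfold mkarr; intros H1 H2.
  pose proof (f_equal (@projT1 _ _) H1) as ea; simpl in ea; subst a'.
  apply inj_pairT2 in H1.
  pose proof (f_equal (@projT1 _ _) H1) as eb; simpl in eb; subst b'.
  apply inj_pairT2 in H1; subst f'.
  apply inj_pairT2 in H2.
  pose proof (f_equal (@projT1 _ _) H2) as ec; simpl in ec; subst c'.
  apply inj_pairT2 in H2; subst g'. reflexivity.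
Qed.

Definition is_fib_grpd (D C : Cat) (P : Functor D C) : Prop :=
  (forall (d : ob D) (c : ob C) (f : hom c (fobj P d)),
      exists (c' : ob D) (g : hom c' d), mkarr (fmap P g) = mkarr f) /\
  (forall (d0 d1 d2 : ob D) (z12 : hom d1 d2) (z02 : hom d0 d2)
          (f01 : hom (fobj P d0) (fobj P d1)),
      comp (fmap P z12) f01 = fmap P z02 ->
      exists! g : hom d0 d1, fmap P g = f01 /\ comp z12 g = z02).
Arguments is_fib_grpd {D C} P.

(** * The 2-category of categories over a base [C] *)

Record CatOver (C : Cat) := { tot : Cat; proj : Functor tot C }.
Arguments tot {C} _.
Arguments proj {C} _.

Record OverFun (C : Cat) (A B : CatOver C) := {
  ofun : Functor (tot A) (tot B);
  ofun_over : forall x y (f : @hom (tot A) x y),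
      mkarr (fmap (proj B) (fmap ofun f)) = mkarr (fmap (proj A) f) }.
Arguments OverFun {C} A B.
Arguments ofun {C A B} _.
Arguments ofun_over {C A B} _ {x y} f.

Definition idOF (C : Cat) (A : CatOver C) : OverFun A A :=
  {| ofun := IdF (tot A); ofun_over := fun x y f => eq_refl |}.

Arguments idOF {C} A.

Definition compOF (C : Cat) (A B D : CatOver C) (F : OverFun A B) (G : OverFun B D)
  : OverFun A D :=
  {| ofun := CompF (ofun F) (ofun G);
     ofun_over := fun x y f => eq_trans (ofun_over G (fmap (ofun F) f)) (ofun_over F f) |}.
Arguments compOF {C A B D} F G.

Record VNatIso (C : Cat) (A B : CatOver C) (F G : OverFun A B) := {
  vcomp : forall x, hom (fobj (ofun F) x) (fobj (ofun G) x);
  vnat : forall x y (f : @hom (tot A) x y),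
      comp (vcomp y) (fmap (ofun F) f) = comp (fmap (ofun G) f) (vcomp x);
  vvert : forall x, mkarr (fmap (proj B) (vcomp x)) = mkarr (idm (fobj (proj A) x));
  viso : forall x, is_iso (vcomp x) }.
Arguments VNatIso {C A B} F G.

Definition is_equiv_over (C : Cat) (A B : CatOver C) (F : OverFun A B) : Prop :=
  exists G : OverFun B A,
    inhabited (VNatIso (compOF F G) (idOF A)) /\
    inhabited (VNatIso (compOF G F) (idOF B)).
Arguments is_equiv_over {C A B} F.

Definition TermOver (C : Cat) : CatOver C := {| tot := C; proj := IdF C |}.

Section FP.
Context (C : Cat) (A B : CatOver C).

Definition FPob : Type :=
  {p : ob (tot A) * ob (tot B) | fobj (proj A) (fst p) = fobj (proj B) (snd p)}.

Definition FPhom (P Q : FPob) : Type :=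
  {fg : @hom (tot A) (fst (proj1_sig P)) (fst (proj1_sig Q))
        * @hom (tot B) (snd (proj1_sig P)) (snd (proj1_sig Q))
   | mkarr (fmap (proj A) (fst fg)) = mkarr (fmap (proj B) (snd fg))}.

Definition mkFPhom (P Q : FPob)
  (f : @hom (tot A) (fst (proj1_sig P)) (fst (proj1_sig Q)))
  (g : @hom (tot B) (snd (proj1_sig P)) (snd (proj1_sig Q)))
  (e : mkarr (fmap (proj A) f) = mkarr (fmap (proj B) g)) : FPhom P Q :=
  exist (fun fg => mkarr (fmap (proj A) (fst fg)) = mkarr (fmap (proj B) (snd fg))) (f, g) e.

Lemma FPhom_eq (P Q : FPob) (f g : FPhom P Q) : proj1_sig f = proj1_sig g -> f = g.
Proof.
  destruct f as [f pf], g as [g pg]; simpl; intro e; subst g.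
  f_equal; apply proof_irrelevance.
Qed.

Definition FPid (P : FPob) : FPhom P P.
Proof.
  refine (exist _ (idm _, idm _) _); simpl.
  rewrite !fmap_id. destruct P as [[a b] e]; simpl in *. rewrite e. reflexivity.
Defined.

Definition FPcomp (P Q R : FPob) (g : FPhom Q R) (f : FPhom P Q) : FPhom P R.
Proof.
  refine (exist _ (comp (fst (proj1_sig g)) (fst (proj1_sig f)),
                   comp (snd (proj1_sig g)) (snd (proj1_sig f))) _); simpl.
  rewrite !fmap_comp. apply mkarr_comp.
  - exact (proj2_sig f).
  - exact (proj2_sig g).
Defined.

Definition FP : Cat.
Proof.
  refine {| ob := FPob; hom := FPhom; idm := FPid; comp := FPcomp |}.
  - intros P Q f; apply FPhom_eq; destruct f as [[f1 f2] pf]; simpl.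
    rewrite !comp_idl; reflexivity.
  - intros P Q f; apply FPhom_eq; destruct f as [[f1 f2] pf]; simpl.
    rewrite !comp_idr; reflexivity.
  - intros P Q R S f g h; apply FPhom_eq; simpl.
    rewrite !comp_assoc; reflexivity.
Defined.

Definition FPproj : Functor FP C.
Proof.
  refine (@Build_Functor FP C (fun P : FPob => fobj (proj A) (fst (proj1_sig P)))
            (fun P Q (f : FPhom P Q) => fmap (proj A) (fst (proj1_sig f))) _ _).
  - intro P; simpl; apply fmap_id.
  - intros P Q R f g; simpl; apply fmap_comp.
Defined.

Definition FPover : CatOver C := {| tot := FP; proj := FPproj |}.

End FP.
Arguments FPover {C} A B.
Arguments FPob {C} A B.
Arguments FPhom {C} A B _ _.
Arguments FP {C} A B.
Arguments mkFPhom {C A B} P Q f g e.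
Arguments FPhom_eq {C A B P Q} f g _.

Definition pr1OF (C : Cat) (A B : CatOver C) : OverFun (FPover A B) A.
Proof.
  unshelve refine (@Build_OverFun C (FPover A B) A (@Build_Functor (FP A B) (tot A) (fun P : FPob A B => fst (proj1_sig P))
                       (fun P Q (f : FPhom A B P Q) => fst (proj1_sig f)) _ _) _).
  all: intros; reflexivity.
Defined.
Arguments pr1OF {C} A B.

Lemma over_ob (C : Cat) (X A : CatOver C) (F : OverFun X A) (x : ob (tot X)) :
  fobj (proj A) (fobj (ofun F) x) = fobj (proj X) x.
Proof. exact (f_equal (@projT1 _ _) (ofun_over F (idm x))). Qed.

Arguments over_ob {C X A} F x.

Definition pairOF (C : Cat) (X A B : CatOver C) (F : OverFun X A) (G : OverFun X B)
  : OverFun X (FPover A B).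
Proof.
  unshelve refine (@Build_OverFun C X (FPover A B) (@Build_Functor (tot X) (FP A B) (fun x =>
        exist _ (fobj (ofun F) x, fobj (ofun G) x)
              (eq_trans (over_ob F x) (eq_sym (over_ob G x))) : FPob A B)
      (fun x y f =>
        mkFPhom (exist _ (fobj (ofun F) x, fobj (ofun G) x)
              (eq_trans (over_ob F x) (eq_sym (over_ob G x))))
           (exist _ (fobj (ofun F) y, fobj (ofun G) y)
              (eq_trans (over_ob F y) (eq_sym (over_ob G y))))
          (fmap (ofun F) f) (fmap (ofun G) f)
              (eq_trans (ofun_over F f) (eq_sym (ofun_over G f)))) _ _) _).
  - intro x; apply FPhom_eq; simpl; rewrite !fmap_id; reflexivity.
  - intros x y z f g; apply FPhom_eq; simpl; rewrite !fmap_comp; reflexivity.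
  - intros x y f; simpl. exact (ofun_over F f).
Defined.
Arguments pairOF {C X A B} F G.

(** * Smooth 2-groups over the base [C]

    A group object in the 2-category of categories over [C] (the paper
    takes [C = Cart]).  Natural transformations
    between functors out of (iterated) fibered products are written
    componentwise; since the objects of [H x_C H] carry a proof that the
    two components lie over the same object of [C], components are
    indexed by arbitrary such proofs (by proof irrelevance this is the
    same data as a natural transformation). *)

Section Monoidal.
Context (C : Cat) (H : CatOver C).
Context (u : OverFun (TermOver C) H) (T : OverFun (FPover H H) H).

Local Notation piH := (proj H).
Local Notation Ho := (ob (tot H)).

Definition tensO (x y : Ho) (e : fobj piH x = fobj piH y) : Ho :=
  fobj (ofun T) (exist _ (x, y) e : FPob H H).

Definition tensM (x x' y y' : Ho) (f : hom x x') (g : hom y y')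
  (c : mkarr (fmap piH f) = mkarr (fmap piH g))
  (ex : fobj piH x = fobj piH y) (ex' : fobj piH x' = fobj piH y')
  : hom (tensO x y ex) (tensO x' y' ex') :=
  fmap (ofun T) (mkFPhom (exist _ (x, y) ex : FPob H H) (exist _ (x', y') ex') f g c).

Arguments tensM {x x' y y'} f g c ex ex'.

Definition unitO (c : ob C) : Ho := fobj (ofun u) c.

Definition AssocT : Type :=
  forall (x y z : Ho) (e1 : fobj piH x = fobj piH y)
         (e2 : fobj piH (tensO x y e1) = fobj piH z)
         (e3 : fobj piH y = fobj piH z)
         (e4 : fobj piH x = fobj piH (tensO y z e3)),
    hom (tensO (tensO x y e1) z e2) (tensO x (tensO y z e3) e4).

Definition LUnitT : Type :=
  forall (x : Ho) (e : fobj piH (unitO (fobj piH x)) = fobj piH x),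
    hom (tensO (unitO (fobj piH x)) x e) x.

Definition RUnitT : Type :=
  forall (x : Ho) (e : fobj piH x = fobj piH (unitO (fobj piH x))),
    hom (tensO x (unitO (fobj piH x)) e) x.

Definition assoc_natural (a : AssocT) : Prop :=
  forall (x y z x' y' z' : Ho) (f : hom x x') (g : hom y y') (h : hom z z')
    e1 e2 e3 e4 e1' e2' e3' e4'
    (cfg : mkarr (fmap piH f) = mkarr (fmap piH g))
    (cgh : mkarr (fmap piH g) = mkarr (fmap piH h))
    (c1 : mkarr (fmap piH (tensM f g cfg e1 e1')) = mkarr (fmap piH h))
    (c2 : mkarr (fmap piH f) = mkarr (fmap piH (tensM g h cgh e3 e3'))),
    comp (a x' y' z' e1' e2' e3' e4') (tensM (tensM f g cfg e1 e1') h c1 e2 e2')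
    = comp (tensM f (tensM g h cgh e3 e3') c2 e4 e4') (a x y z e1 e2 e3 e4).

Definition assoc_vertical (a : AssocT) : Prop :=
  forall x y z e1 e2 e3 e4,
    mkarr (fmap piH (a x y z e1 e2 e3 e4))
    = mkarr (idm (fobj piH (tensO (tensO x y e1) z e2))).

Definition assoc_iso (a : AssocT) : Prop :=
  forall x y z e1 e2 e3 e4, is_iso (a x y z e1 e2 e3 e4).

Definition lunit_natural (l : LUnitT) : Prop :=
  forall (x x' : Ho) (f : hom x x') e e'
    (c : mkarr (fmap piH (fmap (ofun u) (fmap piH f))) = mkarr (fmap piH f)),
    comp (l x' e') (tensM (fmap (ofun u) (fmap piH f)) f c e e') = comp f (l x e).

Definition runit_natural (r : RUnitT) : Prop :=
  forall (x x' : Ho) (f : hom x x') e e'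
    (c : mkarr (fmap piH f) = mkarr (fmap piH (fmap (ofun u) (fmap piH f)))),
    comp (r x' e') (tensM f (fmap (ofun u) (fmap piH f)) c e e') = comp f (r x e).

Definition lunit_vertical (l : LUnitT) : Prop :=
  forall x e, mkarr (fmap piH (l x e)) = mkarr (idm (fobj piH x)).
Definition runit_vertical (r : RUnitT) : Prop :=
  forall x e, mkarr (fmap piH (r x e)) = mkarr (idm (fobj piH x)).
Definition lunit_iso (l : LUnitT) : Prop := forall x e, is_iso (l x e).
Definition runit_iso (r : RUnitT) : Prop := forall x e, is_iso (r x e).

Definition pentagon (a : AssocT) : Prop :=
  forall (x y z w : Ho) p1 q1 q2 q3 q4 s3 s4 t3 t4 v1 v3 v4 cB1 cB3,
    comp (a x y (tensO z w q3) p1 q4 s3 s4) (a (tensO x y p1) z w q1 q2 q3 q4)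
    = comp (tensM (idm x) (a y z w t3 v3 q3 s3) cB3 v4 s4)
        (comp (a x (tensO y z t3) w t4 v1 v3 v4)
              (tensM (a x y z p1 q1 t3 t4) (idm w) cB1 q2 v1)).

(** The unit objects
    [u(pi x)] and [u(pi y)] are only propositionally equal, so the two sides
    are compared as arrows (source, target, morphism). *)
Definition triangle (a : AssocT) (l : LUnitT) (r : RUnitT) : Prop :=
  forall (x y : Ho) e1 e2 e3 e4 eb e5 e6 c1 c2,
    mkarr (comp (tensM (idm x) (l y e3) c1 e4 eb)
                (a x (unitO (fobj piH y)) y e1 e2 e3 e4))
    = mkarr (tensM (r x e5) (idm y) c2 e6 eb).

End Monoidal.

Arguments tensO {C H} T x y e.
Arguments tensM {C H} T {x x' y y'} f g c ex ex'.
Arguments unitO {C H} u c.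
Arguments AssocT {C H} T.
Arguments LUnitT {C H} u T.
Arguments RUnitT {C H} u T.
Arguments assoc_natural {C H} T a.
Arguments assoc_vertical {C H} T a.
Arguments assoc_iso {C H} T a.
Arguments lunit_natural {C H} u T l.
Arguments runit_natural {C H} u T r.
Arguments lunit_vertical {C H} u T l.
Arguments runit_vertical {C H} u T r.
Arguments lunit_iso {C H} u T l.
Arguments runit_iso {C H} u T r.
Arguments pentagon {C H} T a.
Arguments triangle {C H} u T a l r.

Record Smooth2Group (C : Cat) := {
  s2_cat : CatOver C;
  s2_fib : is_fib_grpd (proj s2_cat);
  s2_unit : OverFun (TermOver C) s2_cat;
  s2_tens : OverFun (FPover s2_cat s2_cat) s2_cat;
  s2_assoc : AssocT s2_tens;
  s2_lunit : LUnitT s2_unit s2_tens;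
  s2_runit : RUnitT s2_unit s2_tens;
  s2_assoc_nat : assoc_natural s2_tens s2_assoc;
  s2_assoc_vert : assoc_vertical s2_tens s2_assoc;
  s2_assoc_iso : assoc_iso s2_tens s2_assoc;
  s2_lunit_nat : lunit_natural s2_unit s2_tens s2_lunit;
  s2_lunit_vert : lunit_vertical s2_unit s2_tens s2_lunit;
  s2_lunit_iso : lunit_iso s2_unit s2_tens s2_lunit;
  s2_runit_nat : runit_natural s2_unit s2_tens s2_runit;
  s2_runit_vert : runit_vertical s2_unit s2_tens s2_runit;
  s2_runit_iso : runit_iso s2_unit s2_tens s2_runit;
  s2_pentagon : pentagon s2_tens s2_assoc;
  s2_triangle : triangle s2_unit s2_tens s2_assoc s2_lunit s2_runit;
  s2_shear : is_equiv_over (pairOF s2_tens (pr1OF s2_cat s2_cat)) }.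
Arguments s2_cat {C} _.
Arguments s2_unit {C} _.
Arguments s2_tens {C} _.
Arguments s2_assoc {C} _.
Arguments s2_lunit {C} _.
Arguments s2_runit {C} _.

Section Morphism.
Context (C : Cat) (G K : Smooth2Group C).
Local Notation HG := (s2_cat G).
Local Notation HK := (s2_cat K).
Local Notation piG := (proj HG).
Local Notation piK := (proj HK).
Local Notation TG := (s2_tens G).
Local Notation TK := (s2_tens K).
Local Notation uG := (s2_unit G).
Local Notation uK := (s2_unit K).

Record S2Mor := {
  mp : OverFun HG HK;
  mu : forall (x y : ob (tot HG)) (e : fobj piG x = fobj piG y)
              (e' : fobj piK (fobj (ofun mp) x) = fobj piK (fobj (ofun mp) y)),
      hom (fobj (ofun mp) (tensO TG x y e))
          (tensO TK (fobj (ofun mp) x) (fobj (ofun mp) y) e');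
  mu_nat : forall x y x' y' (f : hom x x') (g : hom y y') c c' e1 e1' e2 e2',
      comp (mu x' y' e1' e2') (fmap (ofun mp) (tensM TG f g c e1 e1'))
      = comp (tensM TK (fmap (ofun mp) f) (fmap (ofun mp) g) c' e2 e2') (mu x y e1 e2);
  mu_vert : forall x y e e',
      mkarr (fmap piK (mu x y e e'))
      = mkarr (idm (fobj piK (fobj (ofun mp) (tensO TG x y e))));
  mu_iso : forall x y e e', is_iso (mu x y e e');
  eps : forall c : ob C, hom (fobj (ofun mp) (unitO uG c)) (unitO uK c);
  eps_nat : forall (c c' : ob C) (f : hom c c'),
      comp (eps c') (fmap (ofun mp) (fmap (ofun uG) f))
      = comp (fmap (ofun uK) f) (eps c);
  eps_vert : forall c, mkarr (fmap piK (eps c)) = mkarr (idm c);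
  eps_iso : forall c, is_iso (eps c);
  mu_assoc : forall (x y z : ob (tot HG)) e1 e2 e3 e4 f1 f2 f3 g4 h2 f4 k1 k2,
      comp (tensM TK (idm (fobj (ofun mp) x)) (mu y z e3 f3) k1 f4 g4)
           (comp (mu x (tensO TG y z e3) e4 f4)
                 (fmap (ofun mp) (s2_assoc G x y z e1 e2 e3 e4)))
      = comp (s2_assoc K (fobj (ofun mp) x) (fobj (ofun mp) y) (fobj (ofun mp) z)
                        f1 f2 f3 g4)
             (comp (tensM TK (mu x y e1 f1) (idm (fobj (ofun mp) z)) k2 h2 f2)
                   (mu (tensO TG x y e1) z e2 h2));
  mu_lunit : forall (x : ob (tot HG)) e e0 f1 f2 k,
      mkarr (fmap (ofun mp) (s2_lunit G x e))
      = mkarr (comp (s2_lunit K (fobj (ofun mp) x) f2)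
                 (comp (tensM TK (eps (fobj piK (fobj (ofun mp) x)))
                              (idm (fobj (ofun mp) x)) k f1 f2)
                       (mu (unitO uG (fobj piK (fobj (ofun mp) x))) x e0 f1)));
  mu_runit : forall (x : ob (tot HG)) e e0 f1 f2 k,
      mkarr (fmap (ofun mp) (s2_runit G x e))
      = mkarr (comp (s2_runit K (fobj (ofun mp) x) f2)
                 (comp (tensM TK (idm (fobj (ofun mp) x))
                              (eps (fobj piK (fobj (ofun mp) x))) k f1 f2)
                       (mu x (unitO uG (fobj piK (fobj (ofun mp) x))) e0 f1))) }.

End Morphism.
Arguments S2Mor {C} G K.
Arguments mp {C G K} _.

(** * The homotopy kernel [ker^h(p)] of [p : H -> K] and [kappa] *)
Section Kernel.
Context (C : Cat) (H K : CatOver C) (p : OverFun H K) (uK : OverFun (TermOver C) K).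
Local Notation piH := (proj H).
Local Notation piK := (proj K).

Definition KerOb : Type :=
  {h : ob (tot H) &
   {eta : hom (fobj (ofun p) h) (fobj (ofun uK) (fobj piH h))
    | is_iso eta /\ mkarr (fmap piK eta) = mkarr (idm (fobj piH h))}}.

Definition ker_h (P : KerOb) : ob (tot H) := projT1 P.
Definition ker_eta (P : KerOb) :
  hom (fobj (ofun p) (ker_h P)) (fobj (ofun uK) (fobj piH (ker_h P))) :=
  proj1_sig (projT2 P).

Definition KerHom (P Q : KerOb) : Type :=
  {z : hom (ker_h P) (ker_h Q)
   | comp (ker_eta Q) (fmap (ofun p) z) = comp (fmap (ofun uK) (fmap piH z)) (ker_eta P)}.

Lemma KerHom_eq (P Q : KerOb) (f g : KerHom P Q) : proj1_sig f = proj1_sig g -> f = g.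
Proof.
  destruct f as [f pf], g as [g pg]; simpl; intro e; subst g.
  f_equal; apply proof_irrelevance.
Qed.

Definition Kerid (P : KerOb) : KerHom P P.
Proof.
  refine (exist _ (idm _) _).
  rewrite !fmap_id.
  rewrite comp_idl, comp_idr. reflexivity.
Defined.

Definition Kercomp (P Q R : KerOb) (g : KerHom Q R) (f : KerHom P Q) : KerHom P R.
Proof.
  refine (exist _ (comp (proj1_sig g) (proj1_sig f)) _).
  destruct f as [f pf], g as [g pg]; simpl.
  rewrite !fmap_comp.
  etransitivity; [apply comp_assoc|].
  etransitivity; [apply (f_equal (fun k => comp k (fmap (ofun p) f)) pg)|].
  etransitivity; [symmetry; apply comp_assoc|].
  etransitivity; [apply (f_equal (fun k => comp (fmap (ofun uK) (fmap piH g)) k) pf)|].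
  apply comp_assoc.
Defined.

Definition KerCat : Cat.
Proof.
  refine {| ob := KerOb; hom := KerHom; idm := Kerid; comp := Kercomp |}.
  - intros P Q f; apply KerHom_eq; simpl; apply comp_idl.
  - intros P Q f; apply KerHom_eq; simpl; apply comp_idr.
  - intros P Q R S f g h; apply KerHom_eq; simpl; apply comp_assoc.
Defined.

Definition kappa : Functor KerCat C.
Proof.
  refine (@Build_Functor KerCat C (fun P : KerOb => fobj piH (ker_h P))
            (fun P Q (f : KerHom P Q) => fmap piH (proj1_sig f)) _ _).
  - intro P; simpl; apply fmap_id.
  - intros P Q R f g; simpl; apply fmap_comp.
Defined.

End Kernel.
Arguments KerCat {C H K} p uK.
Arguments kappa {C H K} p uK.

Definition kappa2 (C : Cat) (H K : Smooth2Group C) (p : S2Mor H K)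
  : Functor (KerCat (mp p) (s2_unit K)) C :=
  kappa (mp p) (s2_unit K).
Arguments kappa2 {C H K} p.

(* A lift of f : c -> pi(h) to an object (h, eta) is obtained by lifting
   f to g : h' -> h in H and then, K being fibred in groupoids, factoring
   eta o p(g) through u(pi g) by a vertical morphism eta', which is
   automatically invertible.  Cartesianness in the kernel reduces to that of
   H, the kernel condition on the induced morphism following from
   Cartesianness (hence cancellability) of the morphisms u(pi z) in K. *)
From Stdlib Require Import Eqdep.

Definition cartesian {D C : Cat} (P : Functor D C) : Prop :=
  forall (d0 d1 d2 : ob D) (z12 : hom d1 d2) (z02 : hom d0 d2)
         (f01 : hom (fobj P d0) (fobj P d1)),
    comp (fmap P z12) f01 = fmap P z02 ->
    exists! g : hom d0 d1, fmap P g = f01 /\ comp z12 g = z02.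

Lemma fib_grpd_cartesian {D C : Cat} (P : Functor D C) :
  is_fib_grpd P -> cartesian P.
Proof. intros [_ HP]; exact HP. Qed.

Lemma mkarr_idm_ind {C : Cat} (Q : forall a b : ob C, hom a b -> Prop)
  {a b c : ob C} (f : hom a b) :
  mkarr f = mkarr (idm c) -> Q c c (idm c) -> Q a b f.
Proof.
  unfold mkarr; intros Hf HQ.
  pose proof (f_equal (@projT1 _ _) Hf) as ea; simpl in ea; subst a.
  apply inj_pairT2 in Hf.
  pose proof (f_equal (@projT1 _ _) Hf) as eb; simpl in eb; subst b.
  apply inj_pairT2 in Hf; subst f. exact HQ.
Qed.

Lemma eq_idm_arr {C : Cat} {a b : ob C} :
  a = b -> {f : hom a b | mkarr f = mkarr (idm b)}.
Proof. intros e; subst b. exists (idm a). reflexivity. Qed.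

Lemma mkarr_comp_idml {C : Cat} {a b b' c : ob C} (g : hom b b') (f : hom a b) :
  mkarr g = mkarr (idm c) -> mkarr (comp g f) = mkarr f.
Proof.
  intro Hg; revert f.
  apply (mkarr_idm_ind (fun b b' g => forall f : hom a b, mkarr (comp g f) = mkarr f) g Hg).
  intro f; rewrite comp_idl; reflexivity.
Qed.

Lemma mkarr_comp_idmr {C : Cat} {a b b' c : ob C} (g : hom b b') (f : hom a b) :
  mkarr f = mkarr (idm c) -> mkarr (comp g f) = mkarr g.
Proof.
  intro Hf; revert g.
  apply (mkarr_idm_ind (fun a b f => forall g : hom b b', mkarr (comp g f) = mkarr g) f Hf).
  intro g; rewrite comp_idr; reflexivity.
Qed.

Lemma mkarr_idm_inv {C : Cat} {a b c : ob C} (f : hom a b) :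
  mkarr f = mkarr (idm c) ->
  exists g : hom b a, comp f g = idm b /\ mkarr g = mkarr (idm c).
Proof.
  intro Hf.
  apply (mkarr_idm_ind
           (fun a b f => exists g : hom b a, comp f g = idm b /\ mkarr g = mkarr (idm c))
           f Hf).
  exists (idm c); split; [apply comp_idl | reflexivity].
Qed.

Section Cartesian.
Context {D C : Cat} {P : Functor D C} (cartP : cartesian P).

Lemma cartesian_vertical_section {d0 d1 : ob D} (z : hom d0 d1) (c : ob C) :
  mkarr (fmap P z) = mkarr (idm c) ->
  exists w : hom d1 d0, comp z w = idm d1 /\ mkarr (fmap P w) = mkarr (idm c).
Proof.
  intro Hz; destruct (mkarr_idm_inv _ Hz) as [g [Hzg Hg]].
  destruct (cartP d1 d0 d1 z (idm d1) g) as [w [[Hw Hzw] _]].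
  - rewrite fmap_id; exact Hzg.
  - exists w; split; [exact Hzw | rewrite Hw; exact Hg].
Qed.

(* A vertical morphism has a vertical right inverse, which in turn has one;
   the two coincide, so the morphism is invertible. *)
Lemma cartesian_vertical_iso {d0 d1 : ob D} (z : hom d0 d1) (c : ob C) :
  mkarr (fmap P z) = mkarr (idm c) -> is_iso z.
Proof.
  intro Hz.
  destruct (cartesian_vertical_section z c Hz) as [w [Hzw Hw]].
  destruct (cartesian_vertical_section w c Hw) as [w' [Hww' _]].
  assert (Ez : z = w').
  { rewrite <- (comp_idr z), <- Hww', comp_assoc, Hzw, comp_idl; reflexivity. }
  exists w; split; [rewrite Ez; exact Hww' | exact Hzw].
Qed.

Lemma cartesian_cancel {d0 d1 d2 : ob D} (z : hom d1 d2) (a b : hom d0 d1) :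
  comp z a = comp z b -> mkarr (fmap P a) = mkarr (fmap P b) -> a = b.
Proof.
  intros Ezab Eab; apply mkarr_inv in Eab.
  destruct (cartP d0 d1 d2 z (comp z a) (fmap P a)) as [g [_ Hg]].
  - symmetry; apply fmap_comp.
  - transitivity g; [symmetry|]; apply Hg; split; auto.
Qed.

End Cartesian.

Section KernelFibration.
Variables (C : Cat) (H K : CatOver C) (p : OverFun H K) (uK : OverFun (TermOver C) K).
Hypotheses (fibH : is_fib_grpd (proj H)) (cartK : cartesian (proj K)).

Local Notation piH := (proj H).
Local Notation piK := (proj K).
Local Notation KerOb := (KerOb C H K p uK).
Local Notation ker_h := (ker_h C H K p uK).
Local Notation ker_eta := (ker_eta C H K p uK).

Lemma ker_eta_vertical (P : KerOb) :
  mkarr (fmap piK (ker_eta P)) = mkarr (idm (fobj piH (ker_h P))).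
Proof. exact (proj2 (proj2_sig (projT2 P))). Qed.

Lemma ker_square_proj {h0 h1 : ob (tot H)} (z : hom h0 h1)
  (eta0 : hom (fobj (ofun p) h0) (fobj (ofun uK) (fobj piH h0)))
  (eta1 : hom (fobj (ofun p) h1) (fobj (ofun uK) (fobj piH h1))) :
  mkarr (fmap piK eta0) = mkarr (idm (fobj piH h0)) ->
  mkarr (fmap piK eta1) = mkarr (idm (fobj piH h1)) ->
  mkarr (fmap piK (comp eta1 (fmap (ofun p) z)))
  = mkarr (fmap piK (comp (fmap (ofun uK) (fmap piH z)) eta0)).
Proof.
  intros Hv0 Hv1; rewrite !fmap_comp.
  rewrite (mkarr_comp_idml _ _ Hv1), (mkarr_comp_idmr _ _ Hv0).
  rewrite (ofun_over p z); symmetry; exact (ofun_over uK (fmap piH z)).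
Qed.

Lemma ker_pullback_eta (P : KerOb) {h : ob (tot H)} (z : hom h (ker_h P)) :
  exists eta : hom (fobj (ofun p) h) (fobj (ofun uK) (fobj piH h)),
    (is_iso eta /\ mkarr (fmap piK eta) = mkarr (idm (fobj piH h)))
    /\ comp (ker_eta P) (fmap (ofun p) z) = comp (fmap (ofun uK) (fmap piH z)) eta.
Proof.
  (* [p h] and [u (pi h)] both lie over [pi h]; [v] is its identity between them. *)
  destruct (eq_idm_arr (eq_trans (over_ob p h) (eq_sym (over_ob uK (fobj piH h)))))
    as [v Hv].
  assert (Hv' : mkarr v = mkarr (idm (fobj piH h))).
  { rewrite Hv, (over_ob uK (fobj piH h)); reflexivity. }
  destruct (cartK _ _ _ (fmap (ofun uK) (fmap piH z))
              (comp (ker_eta P) (fmap (ofun p) z)) v) as [eta [[Heta Hcomp] _]].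
  - apply mkarr_inv; rewrite (mkarr_comp_idmr _ _ Hv').
    rewrite fmap_comp, (mkarr_comp_idml _ _ (ker_eta_vertical P)).
    rewrite (ofun_over uK (fmap piH z)); symmetry; exact (ofun_over p z).
  - assert (Hvert : mkarr (fmap piK eta) = mkarr (idm (fobj piH h))).
    { rewrite Heta; exact Hv'. }
    exists eta; split; [split|].
    + exact (cartesian_vertical_iso cartK _ _ Hvert).
    + exact Hvert.
    + symmetry; exact Hcomp.
Qed.

Lemma ker_square_cancel (P0 P1 P2 : KerOb)
  (z12 : KerHom C H K p uK P1 P2) (z02 : KerHom C H K p uK P0 P2)
  (g : hom (ker_h P0) (ker_h P1)) :
  comp (proj1_sig z12) g = proj1_sig z02 ->
  comp (ker_eta P1) (fmap (ofun p) g) = comp (fmap (ofun uK) (fmap piH g)) (ker_eta P0).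
Proof.
  intro Hg.
  apply (cartesian_cancel cartK (fmap (ofun uK) (fmap piH (proj1_sig z12)))).
  - rewrite comp_assoc, <- (proj2_sig z12), <- comp_assoc, <- fmap_comp, Hg.
    rewrite (proj2_sig z02), comp_assoc, <- !fmap_comp, Hg; reflexivity.
  - apply ker_square_proj; apply ker_eta_vertical.
Qed.

Theorem kappa_fib_grpd : is_fib_grpd (kappa p uK).
Proof.
  destruct fibH as [liftH cartH]; split.
  - intros P c f; simpl in f.
    destruct (liftH (ker_h P) c f) as [h [g Hg]].
    destruct (ker_pullback_eta P g) as [eta [Heta Hsq]].
    exists (existT _ h (exist _ eta Heta) : KerOb).
    exists (exist _ g Hsq); exact Hg.
  - intros P0 P1 P2 z12 z02 f01 E; simpl in E, f01.
    destruct (cartH _ _ _ (proj1_sig z12) (proj1_sig z02) f01 E)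
      as [g [[Hgf Hgz] Hg]].
    exists (exist _ g (ker_square_cancel P0 P1 P2 z12 z02 g Hgz)); split.
    + split; [exact Hgf | apply KerHom_eq; exact Hgz].
    + intros g' [Hg'f Hg'z]; apply KerHom_eq; apply Hg; split.
      * exact Hg'f.
      * exact (f_equal (@proj1_sig _ _) Hg'z).
Qed.

End KernelFibration.

Theorem lemma5p18 (C : Cat) (H K : Smooth2Group C) (p : S2Mor H K) :
  is_fib_grpd (kappa2 p).
Proof.
  apply kappa_fib_grpd; [apply s2_fib | apply fib_grpd_cartesian, s2_fib].
Qed.
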